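(* Let $\mathcal{H}$ be a finite-dimensional Hilbert space, $H$ a Hermitian operator (Hamiltonian) on $\mathcal{H}$ with at most three distinct eigenvalues, $\omega>0$, and $X,Y$ Hermitian operators on $\mathcal{H}$ such that the Heisenberg-picture operators $X(t)\coloneqq e^{iHt/\hbar}Xe^{-iHt/\hbar}$, $Y(t)\coloneqq e^{iHt/\hbar}Ye^{-iHt/\hbar}$ satisfy, for all real $t$, $$X(t)=\cos(\omega t)X+\sin(\omega t)Y,\qquad Y(t)=\cos(\omega t)Y-\sin(\omega t)X.$$ Then for every density operator $\rho$ on $\mathcal{H}$, $$\frac13\sum_{k=0}^2\operatorname{tr}\!\Big[\Theta\big(X(\tfrac{2\pi k}{3\omega})\big)\rho\Big]=\frac12.$$ In particular, this holds whenever $\dim\mathcal{H}\le 3$.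
   Context: For a Hermitian operator $A$, $\Theta(A)$ denotes the spectral function of $A$ with $\Theta(a)=1$ for $a>0$, $\Theta(a)=0$ for $a<0$, $\Theta(0)=1/2$. *)

From HB Require Import structures.
From mathcomp Require Import all_boot all_order all_algebra.
From mathcomp Require Import sesquilinear spectral.
From mathcomp Require Import reals trigo.
From mathcomp Require Import complex.

Set Implicit Arguments.
Unset Strict Implicit.
Unset Printing Implicit Defensive.

Import Order.TTheory GRing.Theory Num.Theory.
Local Open Scope ring_scope.

(* Functional calculus of a normal (in particular Hermitian) matrix:
   f(A) = P^-1 diag(f(l_1),...,f(l_n)) P  where A = P^-1 diag(l) P is the
   unitary spectral decomposition provided by mathcomp's spectral.v. *)
Definition mxfun (C : numClosedFieldType) (n : nat) (f : C -> C)
    (A : 'M[C]_n) : 'M[C]_n :=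
  invmx (spectralmx A) *m diag_mx (map_mx f (spectral_diag A)) *m spectralmx A.

Definition expi (R : realType) (x : R) : R[i] := Complex (cos x) (sin x).

Definition Theta (R : realType) (a : R[i]) : R[i] :=
  if 0 < a then 1 else if a == 0 then 2^-1 else 0.

Definition ThetaMx (R : realType) (n : nat) (A : 'M[R[i]]_n) : 'M[R[i]]_n :=
  mxfun (@Theta R) A.

Definition evol (R : realType) (n : nat) (hbar : R) (H : 'M[R[i]]_n) (t : R)
    : 'M[R[i]]_n :=
  mxfun (fun l : R[i] => expi (complex.Re l * t / hbar)) H.

Definition heis (R : realType) (n : nat) (hbar : R) (H X : 'M[R[i]]_n) (t : R)
    : 'M[R[i]]_n :=
  evol hbar H t *m X *m evol hbar H (- t).

Definition herm_op (C : numClosedFieldType) (n : nat) (A : 'M[C]_n) : Prop :=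
  A \is hermsymmx.

Definition density (C : numClosedFieldType) (n : nat) (rho : 'M[C]_n) : Prop :=
  herm_op rho /\
  (forall v : 'rV[C]_n, 0 <= (v *m rho *m (map_mx Num.conj (v ^T))) 0 0) /\
  \tr rho = 1.

Definition at_most_k_eigenvalues (C : fieldType) (n : nat) (k : nat)
    (A : 'M[C]_n) : Prop :=
  exists s : seq C, (size s <= k)%N /\ forall a, eigenvalue A a -> a \in s.

From HB Require Import structures.
From mathcomp Require Import all_boot all_order all_algebra.
From mathcomp Require Import sesquilinear spectral.
From mathcomp Require Import reals trigo.
From mathcomp Require Import complex.
From mathcomp Require Import ring lra.

Set Implicit Arguments.
Unset Strict Implicit.
Unset Printing Implicit Defensive.

Import Order.TTheory GRing.Theory Num.Theory.
Local Open Scope ring_scope.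

(* In the eigenbasis of H, with energies E_i, the evolution multiplies the
   (i,j) entry of an operator by exp(i (E_i - E_j) t / hbar).  The rotation law
   forces the entries of X to vanish unless E_i - E_j = +-hbar omega.  Theta(X)
   is a polynomial in X, and Theta(X(t)) = Theta(X)(t); with at most three
   levels a polynomial in X cannot connect levels further apart than
   2 hbar omega, so the entries of Theta(X) vanish unless
   E_i - E_j in hbar omega {0, +-1, +-2}.  Averaging over the three sample
   times kills the entries with E_i <> E_j (sums of nontrivial cube roots of
   unity) and keeps the degenerate blocks, where Theta(X) = 1/2 because
   X(pi/omega) = -X and Theta(-X) + Theta(X) = 1.  Hence the average of the
   Theta(X(t_k)) is 1/2. *)

Lemma exists_interpolating_poly (F : fieldType) (s : seq F) (f : F -> F) :
  exists p : {poly F}, {in s, horner p =1 f}.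
Proof.
elim: s => [|a s [p fp]]; first by exists 0.
have [a_s|a_notin_s] := boolP (a \in s).
  by exists p => x; rewrite inE => /predU1P[->|]; apply: fp.
pose q := \prod_(b <- s) ('X - b%:P).
have qa_neq0 : q.[a] != 0 by rewrite -/(root q a) root_prod_XsubC.
have qs : {in s, forall x, q.[x] = 0}.
  by move=> x xs; apply/eqP; rewrite -/(root q x) root_prod_XsubC.
exists (p + ((f a - p.[a]) / q.[a]) *: q) => x; rewrite inE hornerD hornerZ.
case/predU1P => [->|xs]; first by rewrite mulfVK // addrC subrK.
by rewrite (qs x xs) mulr0 addr0 fp.
Qed.

Lemma mulmx1_eq (R : comUnitRingType) n (A B : 'M[R]_n) :
  A *m B = 1%:M -> invmx A = B.
Proof.
move=> AB; have [Au _] := mulmx1_unit AB.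
by rewrite -[invmx A]mulmx1 -AB mulmxA mulVmx // mul1mx.
Qed.

Section Eigenvalues.
Variable F : fieldType.

Lemma eigenvalue_uconj n (V A : 'M[F]_n) : V \in unitmx ->
  eigenvalue (V *m A *m invmx V) =i eigenvalue A.
Proof.
move=> Vu a; rewrite -conjumx //.
apply/idP/idP; last rewrite -[A in eigenvalue A](conjmxK A Vu).
all: apply: eigenvalue_conjmx; rewrite ?row_free_unit ?stablemx_unit ?unitmx_inv //.
Qed.

Lemma eigenvalue_diag_mx n (e : 'rV[F]_n) : eigenvalue (diag_mx e) =i codom (e 0).
Proof.
move=> a; rewrite [_ \in _]eigenvalue_root_char char_poly_trig ?diag_mx_is_trig //.
rewrite -root_prod_XsubC /codom /image_mem big_map big_enum /=.
congr (root _ a); apply: eq_big => [i|i _]; first by rewrite inE.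
by rewrite mxE eqxx.
Qed.

Lemma eigenvalue_diag_conj n (P : 'M[F]_n) (e : 'rV[F]_n) : P \in unitmx ->
  eigenvalue (invmx P *m diag_mx e *m P) =i codom (e 0).
Proof.
move=> Pu a; rewrite -{2}[P]invmxK.
by rewrite eigenvalue_uconj ?unitmx_inv // eigenvalue_diag_mx.
Qed.

End Eigenvalues.

Section FunctionalCalculus.
Variable C : numClosedFieldType.

Lemma horner_mx_diag_conj n (P : 'M[C]_n.+1) (e : 'rV[C]_n.+1) (p : {poly C}) f :
  P \in unitmx -> {in codom (e 0), horner p =1 f} ->
  horner_mx (invmx P *m diag_mx e *m P) p = invmx P *m diag_mx (map_mx f e) *m P.
Proof.
move=> Pu pf; rewrite horner_mx_uconjC // horner_mx_diag.
suff -> : map_mx (horner p) e = map_mx f e by [].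
by apply/matrixP => i j; rewrite !mxE (ord1 i) pf ?codom_f.
Qed.

Lemma mxfun_horner n f (A : 'M[C]_n.+1) (p : {poly C}) : A \is normalmx ->
  {in eigenvalue A, horner p =1 f} -> mxfun f A = horner_mx A p.
Proof.
move=> /orthomx_spectralP A_spectral pf.
have pf' : {in codom (spectral_diag A 0), horner p =1 f}.
  move=> a a_spec; apply: pf.
  by rewrite [X in eigenvalue X]A_spectral eigenvalue_diag_conj ?spectral_unit.
by rewrite [in RHS]A_spectral (horner_mx_diag_conj (spectral_unit A) pf').
Qed.

Lemma eigenvalue_interpolation n f (A : 'M[C]_n.+1) : A \is normalmx ->
  exists p : {poly C}, {in eigenvalue A, horner p =1 f}.
Proof.
move=> /orthomx_spectralP A_spectral.
have [p pf] := exists_interpolating_poly (codom (spectral_diag A 0)) f.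
exists p => a; rewrite [X in eigenvalue X]A_spectral eigenvalue_diag_conj ?spectral_unit //.
exact: pf.
Qed.

Lemma mxfun_diag n f (A P : 'M[C]_n.+1) (e : 'rV[C]_n.+1) :
  A \is normalmx -> P \in unitmx -> A = invmx P *m diag_mx e *m P ->
  mxfun f A = invmx P *m diag_mx (map_mx f e) *m P.
Proof.
move=> A_normal Pu A_diag; have [p pf] := eigenvalue_interpolation f A_normal.
have pf' : {in codom (e 0), horner p =1 f}.
  by move=> a a_e; apply: pf; rewrite A_diag eigenvalue_diag_conj.
by rewrite (mxfun_horner A_normal pf) {1}A_diag (horner_mx_diag_conj Pu pf').
Qed.

Lemma mxfun_uconj n f (A V : 'M[C]_n.+1) : V \in unitmx ->
  A \is normalmx -> V *m A *m invmx V \is normalmx ->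
  mxfun f (V *m A *m invmx V) = V *m mxfun f A *m invmx V.
Proof.
move=> Vu A_normal VA_normal; have /orthomx_spectralP A_spectral := A_normal.
have QVu : spectralmx A *m invmx V \in unitmx.
  by rewrite unitmx_mul spectral_unit unitmx_inv.
have invQV : invmx (spectralmx A *m invmx V) = V *m invmx (spectralmx A).
  by apply: mulmx1_eq; rewrite mulmxA mulmxKV // mulmxV // spectral_unit.
rewrite (mxfun_diag f (e := spectral_diag A) VA_normal QVu) invQV.
  by rewrite /mxfun !mulmxA.
by rewrite {1}A_spectral !mulmxA.
Qed.

Lemma hermsymmxD n (A B : 'M[C]_n) :
  A \is hermsymmx -> B \is hermsymmx -> A + B \is hermsymmx.
Proof.
rewrite !qualifE !expr0 !scale1r => /eqP A_herm /eqP B_herm.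
by rewrite linearD /= map_mxD -A_herm -B_herm.
Qed.

Lemma hermsymmxZ n (a : C) (A : 'M[C]_n) :
  a \is Num.real -> A \is hermsymmx -> a *: A \is hermsymmx.
Proof.
rewrite !qualifE !expr0 !scale1r => a_real /eqP A_herm.
by rewrite linearZ /= map_mxZ -A_herm; apply/eqP; congr (_ *: _); exact/esym/conj_Creal.
Qed.

End FunctionalCalculus.

Section Theta.
Variable R : realType.

Lemma Theta_addN (x : R[i]) : x \is Num.real -> Theta (- x) + Theta x = 1.
Proof.
move=> x_real; rewrite /Theta oppr_gt0 oppr_eq0.
case: (real_ltgtP (real0 _) x_real) => _; rewrite ?add0r ?addr0 //.
by rewrite -mulr2n -[_ *+ 2]mulr_natr mulVf // pnatr_eq0.
Qed.

Lemma ThetaMx_addN n (A : 'M[R[i]]_n.+1) : A \is hermsymmx ->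
  ThetaMx (- A) + ThetaMx A = 1%:M.
Proof.
move=> A_herm; have /orthomx_spectralP A_spectral := hermitian_normalmx A_herm.
have e_real := mxOverP (hermitian_spectral_diag_real A_herm).
have NA_normal : - A \is normalmx.
  by rewrite -scaleN1r; apply/hermitian_normalmx/hermsymmxZ; rewrite ?realN ?real1.
rewrite /ThetaMx (mxfun_diag _ (e := - spectral_diag A) NA_normal (spectral_unit A)).
  rewrite /mxfun -mulmxDl -mulmxDr -raddfD /=.
  have -> : map_mx (@Theta R) (- spectral_diag A) + map_mx (@Theta R) (spectral_diag A)
            = const_mx 1.
    by apply/matrixP => i j; rewrite !mxE Theta_addN ?e_real.
  by rewrite diag_const_mx mulmx1 mulVmx // spectral_unit.
by rewrite {1}A_spectral raddfN /= mulmxN mulNmx.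
Qed.

End Theta.

Lemma sum_cube_root (D : idomainType) (z : D) :
  z ^+ 3 = 1 -> z != 1 -> \sum_(k < 3) z ^+ k = 0.
Proof.
move=> z3 z_neq1.
have : (1 - z) * (1 + z + z ^+ 2) = 1 - z ^+ 3 by ring.
rewrite z3 subrr => /eqP; rewrite mulf_eq0 subr_eq0 eq_sym (negbTE z_neq1) /= => /eqP.
by rewrite !big_ord_recr big_ord0 /= add0r.
Qed.

Section Expi.
Variable R : realType.
Implicit Types a b : R.

Lemma expiE a : expi a = (cos a)%:C%C + 'i%C * (sin a)%:C%C.
Proof. by rewrite /expi; simpc. Qed.

Lemma expi0 : expi (0 : R) = 1.
Proof. by rewrite /expi cos0 sin0. Qed.

Lemma expiD a b : expi (a + b) = expi a * expi b.
Proof. by rewrite /expi cosD sinD; simpc; congr Complex; ring. Qed.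

Lemma expi_mulrn a k : expi (a *+ k) = expi a ^+ k.
Proof. by elim: k => [|k IHk]; rewrite ?expi0 // mulrS expiD IHk exprS. Qed.

Lemma expi_2pi : expi (pi *+ 2 : R) = 1.
Proof. by rewrite /expi cos2pi sin2pi. Qed.

Lemma expi_pi : expi (pi : R) = -1.
Proof. by rewrite /expi cospi sinpi; apply/eqP; rewrite eq_complex /= oppr0 !eqxx. Qed.

Lemma expi_freq_inj a b : (forall t, expi (a * t) = expi (b * t)) -> a = b.
Proof.
move=> ab; apply/eqP/negPn/negP => a_neq_b.
have : expi ((a - b) * (pi / (a - b))) = expi 0 by rewrite mulrBl expiD ab -expiD subrr.
rewrite mulrC divfK ?subr_eq0 // expi_pi expi0 => /(congr1 (@complex.Re R)) /=.
lra.
Qed.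

Lemma expi_rotation_freq (theta omega : R) (x y : R[i]) :
  (forall t, expi (theta * t) * x =
     (cos (omega * t))%:C%C * x + (sin (omega * t))%:C%C * y) ->
  (forall t, expi (theta * t) * y =
     (cos (omega * t))%:C%C * y - (sin (omega * t))%:C%C * x) ->
  x != 0 -> theta = omega \/ theta = - omega.
Proof.
move=> rot_x rot_y x_neq0.
(* For s = +-i, x + s y is an eigenvector of the rotation. *)
have freq (s : R[i]) nu : s ^+ 2 = -1 -> x + s * y != 0 ->
    (forall t, expi (nu * t) = (cos (omega * t))%:C%C - s * (sin (omega * t))%:C%C) ->
    theta = nu.
  move=> s2 z_neq0 expi_nu; apply: expi_freq_inj => t; apply: (mulIf z_neq0).
  rewrite expi_nu mulrDr mulrCA rot_x rot_y.
  set c := (cos _)%:C%C; set sn := (sin _)%:C%C.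
  have -> : c * x + sn * y + s * (c * y - sn * x) =
            (c - s * sn) * (x + s * y) + sn * y * (s ^+ 2 + 1) by ring.
  by rewrite s2 addNr mulr0 addr0.
have i2 : 'i%C ^+ 2 = -1 :> R[i] by rewrite sqr_i.
have [z_eq0|z_neq0] := eqVneq (x + 'i%C * y) 0; last first.
  right; apply: freq i2 z_neq0 _ => t.
  by rewrite expiE mulNr cosN sinN rmorphN /= mulrN.
left; apply: (freq (- 'i%C)); first by rewrite sqrrN.
  apply: contra x_neq0 => /eqP zN; apply/eqP.
  have : x *+ 2 = (x + 'i%C * y) + (x + - 'i%C * y) by rewrite mulNr mulr2n; ring.
  by rewrite z_eq0 zN addr0 => /eqP; rewrite mulrn_eq0 => /eqP.
by move=> t; rewrite expiE mulNr opprK.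
Qed.

Lemma expi_third_sum (r : R) : r \in [:: 1; 2; -1; -2] ->
  \sum_(k < 3) expi (r * (2 * pi * k%:R / 3)) = 0.
Proof.
pose a : R := 2 * pi / 3; pose z := expi a.
have z3 : z ^+ 3 = 1.
  by rewrite -expi_mulrn -expi_2pi; congr expi; rewrite /a; field.
have z_neq1 : z != 1.
  apply/eqP => /(congr1 (@complex.Im R)) /=.
  have : 0 < sin a by apply: sin_gt0_pi; have := @pi_gt0 R; rewrite /a; lra.
  lra.
have z2_neq1 : z ^+ 2 != 1.
  apply: contra z_neq1 => /eqP z2; apply/eqP.
  by rewrite -[LHS]mul1r -z3 -exprSr -[4%N]/(2 * 2)%N exprM z2 expr1n.
move=> r_in.
have -> : \sum_(k < 3) expi (r * (2 * pi * k%:R / 3)) =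
          \sum_(k < 3) expi (r * a) ^+ k.
  by apply: eq_bigr => k _; rewrite -expi_mulrn -mulr_natr /a; congr expi; ring.
have [->|->] : expi (r * a) = z \/ expi (r * a) = z ^+ 2.
- move: r_in; rewrite !inE => /or4P[] /eqP ->.
  + by left; rewrite mul1r.
  + by right; rewrite -expi_mulrn mulr_natl.
  + right; rewrite -expi_mulrn -[LHS]mulr1 -expi_2pi -expiD.
    by congr expi; rewrite /a; field.
  + left; rewrite -[LHS]mulr1 -expi_2pi -expiD.
    by congr expi; rewrite /a; field.
- exact: sum_cube_root.
- by apply: sum_cube_root; rewrite // -exprM mulnC exprM z3 expr1n.
Qed.

End Expi.

Lemma three_levels_window_closed (R : realFieldType) (s : seq R) (h a b u v : R) :
  (size s <= 3)%N -> {subset [:: a; b; u; v] <= s} ->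
  a - b \notin [seq r * h | r <- [:: 0; 1; 2; -1; -2]] ->
  (u - v = h \/ u - v = - h) ->
  u \in [seq b + r * h | r <- [:: -1; 0; 1]] ->
  v \in [seq b + r * h | r <- [:: -1; 0; 1]].
Proof.
(* Otherwise a, b, u and v are four distinct elements of s. *)
move=> s3 sub far uv u_near; apply: contraT => v_far.
suff /(uniq_leq_size)/(_ sub) : uniq [:: a; b; u; v] by move/leq_trans/(_ s3).
move: far u_near v_far; rewrite /= !inE !negb_or.
move=> /and5P[/eqP f0 /eqP f1 /eqP f2 /eqP f3 /eqP f4] /or3P[] /eqP u_eq.
all: move=> /and3P[/eqP g1 /eqP g2 /eqP g3]; case: uv => uv.
all: rewrite andbT; repeat (apply/andP; split); apply/eqP => eq.
all: first [ by apply: f0; lra | by apply: f1; lra | by apply: f2; lra | by apply: f3; lra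
           | by apply: f4; lra | by apply: g1; lra | by apply: g2; lra | by apply: g3; lra ].
Qed.

Lemma horner_mx_offblock_entry (R : comNzRingType) n (A : 'M[R]_n.+1)
    (g : 'I_n.+1 -> bool) p i j :
  (forall k l, A k l != 0 -> g k = g l) -> g i != g j -> horner_mx A p i j = 0.
Proof.
move=> gA gij; pose G : 'M[R]_n.+1 := diag_mx (\row_k (g k)%:R).
have GA : comm_mx G A.
  apply/matrixP => k l; rewrite mul_diag_mx mul_mx_diag !mxE.
  by have [->|/gA->] := eqVneq (A k l) 0; rewrite ?mulr0 ?mul0r // mulrC.
move/matrixP/(_ i j): (comm_mx_horner p GA); rewrite mul_diag_mx mul_mx_diag !mxE.
by move: gij; case: (g i); case: (g j) => //= _;
  rewrite mulr1n mulr0n ?(mulr1, mul1r, mulr0, mul0r).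
Qed.

Lemma three_level_far_entry (K : comNzRingType) (R : realFieldType) n
    (E : 'I_n.+1 -> R) (s : seq R) (h : R) (A : 'M[K]_n.+1) p i j :
  (size s <= 3)%N -> (forall k, E k \in s) ->
  (forall k l, A k l != 0 -> E k - E l = h \/ E k - E l = - h) ->
  E i - E j \notin [seq r * h | r <- [:: 0; 1; 2; -1; -2]] ->
  horner_mx A p i j = 0.
Proof.
move=> s3 Es A_gap far.
(* The levels within one step h of E j form a block that A cannot leave. *)
pose near k := E k \in [seq E j + r * h | r <- [:: -1; 0; 1]].
apply: (horner_mx_offblock_entry (g := near)).
  move=> k l /A_gap kl.
  have lk : E l - E k = h \/ E l - E k = - h by case: kl => ?; [right|left]; lra.
  have sub x y : {subset [:: E i; E j; E x; E y] <= s}.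
    by move=> z; rewrite !inE => /or4P[] /eqP->.
  by apply/idP/idP; [apply: three_levels_window_closed s3 (sub k l) far kl
                    | apply: three_levels_window_closed s3 (sub l k) far lk].
have near_j : near j by apply/mapP; exists 0; rewrite ?inE ?eqxx ?orbT ?mul0r ?addr0.
have far_i : ~~ near i.
  apply: contra far => /mapP[r r_in ->]; apply/mapP; exists r.
    by move: r_in; rewrite !inE => /or3P[] /eqP->; rewrite eqxx ?orbT.
  by rewrite addrAC subrr add0r.
by rewrite near_j (negbTE far_i).
Qed.

Definition phase_mx (R : realType) n (hbar t : R) (d : 'rV[R[i]]_n) : 'M[R[i]]_n :=
  diag_mx (map_mx (fun l : R[i] => expi (complex.Re l * t / hbar)) d).

Definition heis_diag (R : realType) n (hbar : R) (d : 'rV[R[i]]_n) (t : R)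
    (M : 'M[R[i]]_n) : 'M[R[i]]_n :=
  phase_mx hbar t d *m M *m phase_mx hbar (- t) d.

Section EnergyBasis.
Variables (R : realType) (n : nat) (hbar : R) (d : 'rV[R[i]]_n).
Local Notation E k := (complex.Re (d 0 k)).
Local Notation heisd := (heis_diag hbar d).

Lemma heis_diag_entry t M i j :
  heisd t M i j = expi ((E i - E j) * t / hbar) * M i j.
Proof.
rewrite /heis_diag mul_mx_diag mxE mul_diag_mx !mxE mulrC mulrA -expiD.
by congr (expi _ * _); ring.
Qed.

Lemma phase_mxNK t : phase_mx hbar (- t) d *m phase_mx hbar t d = 1%:M.
Proof.
apply/matrixP => i j; have := heis_diag_entry (- t) 1%:M i j.
rewrite /heis_diag mulmx1 opprK => ->; rewrite !mxE.
by case: eqP => [->|]; rewrite ?subrr ?mul0r ?expi0 ?mulr1 ?mulr0.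
Qed.

Lemma rotating_entry_gap (omega : R) (A B : 'M_n) : hbar != 0 ->
  (forall t,
     heisd t A = (cos (omega * t))%:C%C *: A + (sin (omega * t))%:C%C *: B) ->
  (forall t,
     heisd t B = (cos (omega * t))%:C%C *: B - (sin (omega * t))%:C%C *: A) ->
  forall i j, A i j != 0 ->
    E i - E j = hbar * omega \/ E i - E j = - (hbar * omega).
Proof.
move=> hbar_neq0 rotA rotB i j Aij.
suff : (E i - E j) / hbar = omega \/ (E i - E j) / hbar = - omega.
  by case=> e; [left|right]; rewrite -?mulrN -e mulrC divfK.
apply: (expi_rotation_freq (y := B i j)) Aij => t.
  by move: (congr1 (fun M : 'M_n => M i j) (rotA t));
    rewrite heis_diag_entry !mxE mulrAC.
by move: (congr1 (fun M : 'M_n => M i j) (rotB t));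
  rewrite heis_diag_entry !mxE mulrAC.
Qed.

Lemma degenerate_entry_half t (T : 'M_n) : heisd t T + T = 1%:M ->
  forall i j, E i = E j -> T i j = (i == j)%:R / 2.
Proof.
move=> hT i j Eij; move: (congr1 (fun M : 'M_n => M i j) hT).
rewrite mxE heis_diag_entry Eij subrr !mul0r expi0 mul1r mxE => <-.
by rewrite -mulr2n -[_ *+ 2]mulr_natr mulfK // pnatr_eq0.
Qed.

Lemma heis_diag_third_sum (omega : R) (T : 'M_n) : hbar != 0 -> omega != 0 ->
  (forall i j, E i = E j -> T i j = (i == j)%:R / 2) ->
  (forall i j, E i - E j \notin [seq r * (hbar * omega) | r <- [:: 0; 1; 2; -1; -2]] ->
     T i j = 0) ->
  \sum_(k < 3) heisd (2 * pi * k%:R / (3 * omega)) T = (3 / 2 : R[i])%:M.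
Proof.
move=> hbar_neq0 omega_neq0 T_degenerate T_far; apply/matrixP => i j.
rewrite summxE mxE (eq_bigr (fun k : 'I_3 =>
  expi ((E i - E j) * (2 * pi * k%:R / (3 * omega)) / hbar) * T i j)); last first.
  by move=> k _; rewrite heis_diag_entry.
rewrite -big_distrl /=.
have [Eij|Eij] := eqVneq (E i) (E j).
  rewrite T_degenerate // Eij subrr.
  under eq_bigr do rewrite !mul0r expi0.
  rewrite sumr_const card_ord.
  by case: (i == j); rewrite ?mulr0n ?mulr1n ?mul0r ?mulr0 //; field.
have /negbTE-> : i != j by apply: contraNneq Eij => ->.
case: (boolP (E i - E j \in [seq r * (hbar * omega) | r <- [:: 0; 1; 2; -1; -2]]));
  last by move/T_far->; rewrite mulr0.
move=> /mapP[r r_in gap].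
move: r_in; rewrite inE => /predU1P[r0|r_in].
  by move: Eij; rewrite -subr_eq0 gap r0 mul0r eqxx.
suff -> : \sum_(k < 3) expi ((E i - E j) * (2 * pi * k%:R / (3 * omega)) / hbar) = 0.
  by rewrite mul0r mulr0n.
apply: eq_trans (expi_third_sum r_in); apply: eq_bigr => k _; congr expi.
by rewrite gap; field; apply/andP.
Qed.

End EnergyBasis.

Section Evolution.
Variables (R : realType) (n : nat) (hbar : R) (H : 'M[R[i]]_n).
Local Notation Q := (spectralmx H).
Local Notation d := (spectral_diag H).

Lemma evolE t : evol hbar H t = invmx Q *m phase_mx hbar t d *m Q.
Proof. by []. Qed.

Lemma invmx_evol t : invmx (evol hbar H t) = evol hbar H (- t).
Proof.
apply: mulmx1_eq; rewrite !evolE !mulmxA mulmxK ?spectral_unit //.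
by rewrite -(mulmxA (invmx Q)) -{1}[t]opprK phase_mxNK mulmx1 mulVmx ?spectral_unit.
Qed.

Lemma evol_unit t : evol hbar H t \in unitmx.
Proof.
have [_ phase_unit] := mulmx1_unit (@phase_mxNK _ _ hbar d t).
by rewrite evolE !unitmx_mul unitmx_inv spectral_unit phase_unit.
Qed.

Lemma heis_uconj M t :
  heis hbar H M t = evol hbar H t *m M *m invmx (evol hbar H t).
Proof. by rewrite invmx_evol. Qed.

Lemma heis_energy_basis M t :
  heis hbar H M t = invmx Q *m heis_diag hbar d t (Q *m M *m invmx Q) *m Q.
Proof. by rewrite /heis /heis_diag !evolE !mulmxA. Qed.

Lemma heis_diag_energy_basis M t :
  heis_diag hbar d t (Q *m M *m invmx Q) = Q *m heis hbar H M t *m invmx Q.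
Proof.
rewrite heis_energy_basis /heis_diag !mulmxA mulmxV ?spectral_unit // mul1mx.
by rewrite mulmxK ?spectral_unit.
Qed.

End Evolution.

Section ThreeLevelSystem.
Variables (R : realType) (n : nat) (hbar omega : R) (H X Y : 'M[R[i]]_n.+1).
Hypotheses (hbar_gt0 : 0 < hbar) (omega_gt0 : 0 < omega).
Hypotheses (H_herm : herm_op H) (H_three_levels : at_most_k_eigenvalues 3 H).
Hypotheses (X_herm : herm_op X) (Y_herm : herm_op Y).
Hypothesis X_rot : forall t : R, heis hbar H X t =
  (cos (omega * t))%:C%C *: X + (sin (omega * t))%:C%C *: Y.
Hypothesis Y_rot : forall t : R, heis hbar H Y t =
  (cos (omega * t))%:C%C *: Y - (sin (omega * t))%:C%C *: X.

Local Notation Q := (spectralmx H).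
Local Notation d := (spectral_diag H).
Local Notation E k := (complex.Re (d 0 k)).
Local Notation energy_basis M := (Q *m M *m invmx Q).

Lemma energy_levels : exists2 s : seq R, (size s <= 3)%N & forall k, E k \in s.
Proof.
have [s [s3 s_eig]] := H_three_levels.
exists (map (@complex.Re R) s); rewrite ?size_map // => k; apply/map_f/s_eig.
have /orthomx_spectralP H_spectral := hermitian_normalmx H_herm.
suff : d 0 k \in eigenvalue H by [].
by rewrite [X in eigenvalue X]H_spectral eigenvalue_diag_conj ?spectral_unit ?codom_f.
Qed.

Lemma heis_X_herm t : heis hbar H X t \is hermsymmx.
Proof.
by rewrite X_rot; apply: hermsymmxD; apply: hermsymmxZ; rewrite ?complex_real.
Qed.

Lemma ThetaMx_heis t : ThetaMx (heis hbar H X t) = heis hbar H (ThetaMx X) t.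
Proof.
rewrite /ThetaMx [in LHS]heis_uconj mxfun_uconj ?evol_unit ?hermitian_normalmx //.
  by rewrite -heis_uconj.
by rewrite -heis_uconj heis_X_herm.
Qed.

Lemma sum_ThetaMx_heis_samples :
  \sum_(k < 3) ThetaMx (heis hbar H X (2 * pi * k%:R / (3 * omega)))
  = (3 / 2 : R[i])%:M.
Proof.
have hbar_neq0 : hbar != 0 by rewrite gt_eqF.
have omega_neq0 : omega != 0 by rewrite gt_eqF.
set T := energy_basis (ThetaMx X).
have T_half : heis_diag hbar d (pi / omega) T + T = 1%:M.
  rewrite heis_diag_energy_basis -ThetaMx_heis X_rot mulrCA divff // mulr1 cospi sinpi.
  rewrite rmorphN1 rmorph0 scaleN1r scale0r addr0 -mulmxDl -mulmxDr ThetaMx_addN //.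
  by rewrite mulmx1 mulmxV ?spectral_unit.
have rotX t : heis_diag hbar d t (energy_basis X) =
    (cos (omega * t))%:C%C *: energy_basis X
    + (sin (omega * t))%:C%C *: energy_basis Y.
  by rewrite heis_diag_energy_basis X_rot mulmxDr mulmxDl -!scalemxAr -!scalemxAl.
have rotY t : heis_diag hbar d t (energy_basis Y) =
    (cos (omega * t))%:C%C *: energy_basis Y
    - (sin (omega * t))%:C%C *: energy_basis X.
  by rewrite heis_diag_energy_basis Y_rot mulmxBr mulmxBl -!scalemxAr -!scalemxAl.
have T_far i j :
    E i - E j \notin [seq r * (hbar * omega) | r <- [:: 0; 1; 2; -1; -2]] ->
    T i j = 0.
  have [p Xp] := eigenvalue_interpolation (@Theta R) (hermitian_normalmx X_herm).
  have [s s3 Es] := energy_levels.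
  rewrite /T /ThetaMx (mxfun_horner (hermitian_normalmx X_herm) Xp).
  rewrite -horner_mx_uconj ?spectral_unit //.
  apply: (three_level_far_entry (E := fun k => E k) (h := hbar * omega)) s3 Es _ => k l.
  exact: rotating_entry_gap hbar_neq0 rotX rotY k l.
under eq_bigr do rewrite ThetaMx_heis heis_energy_basis.
rewrite -mulmx_suml -mulmx_sumr.
rewrite (heis_diag_third_sum hbar_neq0 omega_neq0 (degenerate_entry_half T_half) T_far).
by rewrite mul_mx_scalar -scalemxAl mulVmx ?spectral_unit // scalemx1.
Qed.

End ThreeLevelSystem.

Theorem mainTheorem3 (R : realType) (n : nat) (hbar omega : R)
  (H X Y : 'M[R[i]]_n) :
  0 < hbar -> 0 < omega ->
  herm_op H -> at_most_k_eigenvalues 3 H ->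
  herm_op X -> herm_op Y ->
  (forall t : R, heis hbar H X t =
     (real_complex R (cos (omega * t))) *: X + (real_complex R (sin (omega * t))) *: Y) ->
  (forall t : R, heis hbar H Y t =
     (real_complex R (cos (omega * t))) *: Y - (real_complex R (sin (omega * t))) *: X) ->
  forall rho : 'M[R[i]]_n, density rho ->
    3^-1 * \sum_(k < 3)
      \tr (ThetaMx (heis hbar H X (2 * pi * k%:R / (3 * omega))) *m rho)
    = 2^-1.
Proof.
case: n H X Y => [|n] H X Y hbar_gt0 omega_gt0 H_herm H3 X_herm Y_herm X_rot Y_rot
  rho [_ [_ tr_rho]].
  by move: tr_rho; rewrite /mxtrace big_ord0 => /esym/eqP; rewrite oner_eq0.
rewrite -raddf_sum -mulmx_suml /=.
rewrite (sum_ThetaMx_heis_samples hbar_gt0 omega_gt0 H_herm H3 X_herm Y_herm X_rot Y_rot).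
by rewrite mul_scalar_mx mxtraceZ tr_rho mulr1 mulrA mulVf ?mul1r // pnatr_eq0.
Qed.
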